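(* There is an absolute constant $C>0$ such that the following holds. Let $(U,\mathcal{S})$ be a set system with $|U|=n$ and $|\mathcal{S}|=m$ whose sets cover $U$, let $R\subseteq U$ be nonempty, let $\epsilon>0$, $\delta\in(0,1)$, and $\epsilon'=\epsilon/(2\ln(e/\delta))$. Consider the algorithm that sets $R_1=R$, $\mathcal{S}_1=\mathcal{S}$ and for $i=1,\dots,m$: picks a set $S\in\mathcal{S}_i$ with probability proportional to $\exp(\epsilon'|S\cap R_i|)$, outputs $S$, and sets $R_{i+1}=R_i\setminus S$, $\mathcal{S}_{i+1}=\mathcal{S}_i\setminus\{S\}$. Its cost is the number of distinct sets obtained by assigning each element of $R$ to the first set in the output permutation containing it. Then the expected cost is at most $C\big(\ln n+\frac{\ln m}{\epsilon'}\big)\mathrm{OPT}$, i.e. at most $C'\big(\ln n+\frac{\ln m\,\ln(e/\delta)}{\epsilon}\big)\mathrm{OPT}$ for an absolute constant $C'$.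
   Context: $\mathrm{OPT}$ denotes the minimum number of sets of $\mathcal{S}$ whose union contains $R$. *)

From HB Require Import structures.
From mathcomp Require Import all_boot all_order all_algebra all_fingroup.
From mathcomp Require Import all_classical all_reals all_analysis.
Set Implicit Arguments. Unset Strict Implicit. Unset Printing Implicit Defensive.
Import Order.TTheory GRing.Theory Num.Theory.
Local Open Scope ring_scope.

Definition perm_of (T : finType) : finType := {perm T}.

Section ExpMech.
Variables (R : realType) (U I : finType) (S : I -> {set U}).

Definition emweight (eps : R) (Rcur : {set U}) (j : I) : R :=
  expR (eps * (#|S j :&: Rcur|)%:R).

Fixpoint seq_prob (eps : R) (Rcur : {set U}) (avail : {set I}) (s : seq I) : R :=
  match s with
  | [::] => 1
  | j :: s' =>
      (if j \in avail
       then emweight eps Rcur j / \sum_(k in avail) emweight eps Rcur k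
       else 0) * seq_prob eps (Rcur :\: S j) (avail :\ j) s'
  end.

Definition first_set (s : seq I) (x : U) : option I :=
  ohead [seq j <- s | x \in S j].

Definition order_cost (Rset : {set U}) (s : seq I) : nat :=
  #|[set j : I | [exists x in Rset, first_set s x == Some j]]|.

Definition expected_cost (eps : R) (Rset : {set U}) : R :=
  \sum_(p : perm_of I)
     seq_prob eps Rset [set: I]%SET [seq p j | j <- enum I] *
     (order_cost Rset [seq p j | j <- enum I])%:R.

(* OPT: minimum number of sets whose union contains Rset (default #|I| is
   never attained-irrelevant once the sets cover U, as setT is a cover) *)
Definition opt_cover (Rset : {set U}) : nat :=
  \big[minn/#|I|]_(T : {set I} | Rset \subset \bigcup_(j in T) S j) #|T|.

End ExpMech.

From HB Require Import structures.
From mathcomp Require Import all_boot all_order all_algebra all_fingroup.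
From mathcomp Require Import all_classical all_reals all_analysis.
From mathcomp Require Import ring lra zify.
Set Implicit Arguments. Unset Strict Implicit.
Import Order.TTheory GRing.Theory Num.Theory.
Local Open Scope ring_scope.

(* Fix an optimal cover T0 of R, of size k.  While r elements remain
   uncovered, the still-available sets of T0 cover them, so some available set
   meets at least r/k of them.  The potential [potential] is linear below the
   threshold T = 4k ln m/eps' + 1 and grows like 2k ln r above it, so every pick
   covering a new element lowers it by at least 1 unless r > T and the pick is
   light (covers fewer than r/2k elements).  Exponential weights give light
   picks total probability at most 1/m, hence over m steps the expected cost
   is at most potential |R| + 1 = O(k (ln n + ln m / eps')). *)

Lemma ler_sum_subset_uniq (R : numDomainType) (T : eqType) (s1 s2 : seq T)
    (F : T -> R) :
  uniq s1 -> uniq s2 -> {subset s1 <= s2} -> (forall x, 0 <= F x) ->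
  \sum_(x <- s1) F x <= \sum_(x <- s2) F x.
Proof.
move=> u1 u2 s12 F0.
have -> : \sum_(x <- s1) F x = \sum_(x <- s2 | x \in s1) F x.
  rewrite -[RHS]big_filter; apply: perm_big; apply: uniq_perm; rewrite ?filter_uniq //.
  by move=> x; rewrite mem_filter andb_idr //; apply: s12.
by rewrite [leRHS](bigID (mem s1)) /= lerDl sumr_ge0.
Qed.

Section Cost.
Variables (R : realType) (U I : finType) (S : I -> {set U}) (eps : R).

Fixpoint all_seqs (n : nat) : seq (seq I) :=
  if n is n'.+1 then [seq j :: s | j <- index_enum I, s <- all_seqs n']
  else [:: [::]].

Lemma all_seqs_uniq n : uniq (all_seqs n).
Proof.
elim: n => [//|n IH] /=.
apply: allpairs_uniq => //; first exact: index_enum_uniq.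
by move=> [a s] [b t] _ _ /= [-> ->].
Qed.

Lemma mem_all_seqs s : s \in all_seqs (size s).
Proof.
elim: s => [|j s IH] /=; first by rewrite inE.
by apply: allpairs_f => //; rewrite mem_index_enum.
Qed.

Lemma first_set_cons j s x :
  first_set S (j :: s) x = if x \in S j then Some j else first_set S s x.
Proof. by rewrite /first_set /=; case: ifP. Qed.

Lemma first_set_mem s x j : first_set S s x = Some j -> x \in S j.
Proof.
elim: s => [//|j' s IH]; rewrite first_set_cons.
by case: ifP => [xj [<-] //|_ /IH].
Qed.

Definition used_sets (Rc : {set U}) (s : seq I) : {set I} :=
  [set j | [exists x in Rc, first_set S s x == Some j]].

Lemma used_sets_nil Rc : used_sets Rc [::] = finset.set0.
Proof. by apply/setP => j; rewrite !inE; apply/existsP => -[x /andP[]]. Qed.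

Lemma notin_used_sets_setD Rc j s : j \notin used_sets (Rc :\: S j) s.
Proof.
rewrite inE; apply/existsP => -[x /andP[]]; rewrite !inE => /andP[xNj _].
by move/eqP/first_set_mem; rewrite (negbTE xNj).
Qed.

Lemma first_set_cons_neq j j' s x : j' != j ->
  (first_set S (j :: s) x == Some j') = (x \notin S j) && (first_set S s x == Some j').
Proof.
move=> j'Nj; rewrite first_set_cons; case: ifP => //= _.
by apply/negbTE; apply: contra j'Nj => /eqP[->].
Qed.

Lemma mem_used_sets_cons_neq Rc j j' s : j' != j ->
  (j' \in used_sets Rc (j :: s)) = (j' \in used_sets (Rc :\: S j) s).
Proof.
move=> j'Nj; rewrite !inE; apply: eq_existsb => x.
by rewrite first_set_cons_neq // inE andbA [(x \in Rc) && _]andbC.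
Qed.

Lemma mem_used_sets_cons_head Rc j s :
  (j \in used_sets Rc (j :: s)) = (S j :&: Rc != finset.set0).
Proof.
rewrite inE; apply/existsP/set0Pn; case=> x.
  by case/andP=> xR /eqP/first_set_mem xj; exists x; rewrite inE xj.
by move=> /setIP[xj xR]; exists x; rewrite xR first_set_cons xj eqxx.
Qed.

Lemma used_sets_cons Rc j s :
  used_sets Rc (j :: s) =
  if S j :&: Rc == finset.set0 then used_sets (Rc :\: S j) s
  else j |: used_sets (Rc :\: S j) s.
Proof.
apply/setP => j'; have [->|j'Nj] := eqVneq j' j.
  rewrite mem_used_sets_cons_head.
  by case: eqP => _; rewrite ?setU11 ?(negbTE (notin_used_sets_setD _ _ _)).
by rewrite mem_used_sets_cons_neq //; case: eqP => _; rewrite ?in_setU1 ?(negbTE j'Nj).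
Qed.

Lemma order_cost_nil Rc : order_cost S Rc [::] = 0%N.
Proof. by rewrite /order_cost -/(used_sets _ _) used_sets_nil cards0. Qed.

Lemma order_cost_cons Rc j s :
  order_cost S Rc (j :: s) =
  ((S j :&: Rc != finset.set0) + order_cost S (Rc :\: S j) s)%N.
Proof.
rewrite /order_cost -!/(used_sets _ _) used_sets_cons.
by case: eqP => _; rewrite ?cardsU1 ?notin_used_sets_setD.
Qed.

Definition pick_prob (Rc : {set U}) (A : {set I}) (j : I) : R :=
  if j \in A then emweight S eps Rc j / \sum_(k in A) emweight S eps Rc k
  else 0.

Lemma pick_prob_ge0 Rc A j : 0 <= pick_prob Rc A j.
Proof.
rewrite /pick_prob; case: ifP => // _.
by rewrite divr_ge0 ?sumr_ge0 // => *; exact: expR_ge0.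
Qed.

Lemma sum_pick_prob_le1 Rc A : \sum_j pick_prob Rc A j <= 1.
Proof.
rewrite /pick_prob -big_mkcond /= -mulr_suml.
by have [->|W0] := eqVneq (\sum_(k in A) emweight S eps Rc k) 0;
  rewrite ?mul0r ?divff.
Qed.

Lemma seq_prob_ge0 Rc A s : 0 <= seq_prob S eps Rc A s.
Proof.
elim: s Rc A => [|j s IH] Rc A /=; first exact: ler01.
by rewrite mulr_ge0 //; have := pick_prob_ge0 Rc A j.
Qed.

(* Sums over all length-n sequences: sequences repeating a set have
   probability 0, so these are the total probability and the expected cost
   of the first n outputs of the algorithm started from (Rc, A). *)
Definition prob_mass n Rc A := \sum_(s <- all_seqs n) seq_prob S eps Rc A s.

Definition cost_mass n Rc A :=
  \sum_(s <- all_seqs n) seq_prob S eps Rc A s * (order_cost S Rc s)%:R.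

Lemma prob_mass_le1 n Rc A : prob_mass n Rc A <= 1.
Proof.
elim: n Rc A => [|n IH] Rc A; first by rewrite /prob_mass /= big_seq1.
rewrite /prob_mass /= big_allpairs_dep /=.
apply: le_trans (sum_pick_prob_le1 Rc A); apply: ler_sum => j _.
by rewrite -mulr_sumr ler_piMr //; [exact: pick_prob_ge0|exact: IH].
Qed.

Lemma cost_mass_cons n Rc A :
  cost_mass n.+1 Rc A = \sum_j pick_prob Rc A j *
    ((S j :&: Rc != finset.set0)%:R * prob_mass n (Rc :\: S j) (A :\ j)
     + cost_mass n (Rc :\: S j) (A :\ j)).
Proof.
rewrite /cost_mass /prob_mass /= big_allpairs_dep /=; apply: eq_bigr => j _.
rewrite big_distrr -big_split mulr_sumr; apply: eq_bigr => s _.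
by rewrite -/(pick_prob _ _ _) order_cost_cons natrD /=; ring.
Qed.

Lemma expected_cost_le_cost_mass Rset :
  expected_cost S eps Rset <= cost_mass #|I| Rset [set: I]%SET.
Proof.
rewrite /expected_cost /cost_mass.
rewrite -(big_map (fun p : perm_of I => [seq p j | j <- enum I]) xpredT
  (fun s => seq_prob S eps Rset [set: I]%SET s * (order_cost S Rset s)%:R)).
apply: ler_sum_subset_uniq.
- rewrite map_inj_uniq ?index_enum_uniq // => p p' /eq_in_map E.
  by apply/permP => x; apply: E; rewrite mem_enum.
- exact: all_seqs_uniq.
- move=> _ /mapP[p _ ->]; have := mem_all_seqs [seq p j | j <- enum I].
  by rewrite size_map -cardE.
- by move=> s; rewrite mulr_ge0 ?seq_prob_ge0.
Qed.

End Cost.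

Lemma ln_div_ge (R : realType) (x y : R) : 0 < x -> 0 < y -> 1 - y / x <= ln (x / y).
Proof.
move=> x_gt0 y_gt0; have yx_gt0 : 0 < y / x by rewrite divr_gt0.
have : ln (1 + (y / x - 1)) <= y / x - 1 by apply: le_ln1Dx; lra.
by rewrite addrCA subrr addr0 -[x / y]invf_div lnV ?posrE //; lra.
Qed.

Section Potential.
Variables (R : realType) (eps : R) (k m : nat).
Hypotheses (eps_gt0 : 0 < eps) (m_gt0 : (0 < m)%N).

Definition threshold : R := 4 * k%:R * ln m%:R / eps + 1.

Definition potential (r : nat) : R :=
  if r%:R <= threshold then r%:R
  else threshold + 1 + 2 * k%:R * ln (r%:R / threshold).

Lemma threshold_ge1 : 1 <= threshold.
Proof.
by rewrite lerDr divr_ge0 ?mulr_ge0 ?ln_ge0 ?ler1n // ltW.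
Qed.

Lemma threshold_gt0 : 0 < threshold.
Proof. exact: lt_le_trans ltr01 threshold_ge1. Qed.
Local Hint Resolve threshold_gt0 : core.

Let ln_over_threshold_ge0 (r : nat) : threshold < r%:R -> 0 <= ln (r%:R / threshold).
Proof. by move=> lt_Tr; rewrite ln_ge0 // ler_pdivlMr // mul1r ltW. Qed.

Lemma potential_ge_threshold (r : nat) :
  threshold < r%:R -> threshold + 1 <= potential r.
Proof.
move=> lt_Tr; rewrite /potential (lt_geF lt_Tr) lerDl.
by rewrite mulr_ge0 ?ln_over_threshold_ge0 // mulr_ge0.
Qed.

Lemma potential_ge0 r : 0 <= potential r.
Proof.
case: (lerP (r%:R) threshold) => [le_rT|/potential_ge_threshold].
  by rewrite /potential le_rT.
by apply: le_trans; rewrite addr_ge0 // ltW.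
Qed.

Lemma potential_homo : {homo potential : r1 r2 / (r1 <= r2)%N >-> r1 <= r2}.
Proof.
move=> r1 r2 le12; have le12R : r1%:R <= r2%:R :> R by rewrite ler_nat.
case: (lerP (r2%:R) threshold) => [le2T|lt_T2].
  by rewrite /potential le2T (le_trans le12R le2T).
case: (lerP (r1%:R) threshold) => [le1T|lt_T1].
  rewrite {1}/potential le1T; apply: le_trans (potential_ge_threshold lt_T2).
  by apply: le_trans le1T _; rewrite lerDl.
rewrite /potential (lt_geF lt_T1) (lt_geF lt_T2) lerD2l.
apply: ler_wpM2l; first by rewrite mulr_ge0.
have r_gt0 r : threshold < r%:R -> 0 < r%:R / threshold.
  by move=> lt_Tr; rewrite divr_gt0 // (lt_trans _ lt_Tr).
by rewrite ler_ln ?posrE ?r_gt0 // ler_pM2r ?invr_gt0.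
Qed.

Lemma potential_drop r c : (0 < c <= r)%N ->
  (threshold < r%:R -> (r <= 2 * k * c)%N) -> 1 + potential (r - c) <= potential r.
Proof.
case/andP=> c_gt0 le_cr heavy; have c_ge1 : 1 <= c%:R :> R by rewrite ler1n.
have rc : (r - c)%:R = r%:R - c%:R :> R by rewrite natrB.
case: (lerP (r%:R) threshold) => [le_rT|lt_Tr].
  have le_rcT : (r - c)%:R <= threshold :> R.
    by apply: le_trans le_rT; rewrite ler_nat leq_subr.
  by rewrite /potential le_rT le_rcT rc; lra.
case: (lerP ((r - c)%:R) threshold) => [le_rcT|lt_Trc].
  rewrite {1}/potential le_rcT; apply: le_trans (potential_ge_threshold lt_Tr).
  by rewrite addrC lerD2r.
have r_gt0 : 0 < r%:R :> R by apply: lt_trans lt_Tr.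
have rc_gt0 : 0 < (r - c)%:R :> R by apply: lt_trans lt_Trc.
have ln_gap : ln (r%:R / threshold) - ln ((r - c)%:R / threshold)
    = ln (r%:R / (r - c)%:R) :> R.
  by rewrite !ln_div ?posrE //; ring.
have gap_ge : c%:R / r%:R <= ln (r%:R / (r - c)%:R) :> R.
  have -> : c%:R / r%:R = 1 - (r - c)%:R / r%:R :> R.
    by rewrite rc; field; rewrite gt_eqF.
  exact: ln_div_ge.
have one_le : 1 <= 2 * k%:R * (c%:R / r%:R) :> R.
  by rewrite mulrA ler_pdivlMr // mul1r -!natrM ler_nat heavy.
rewrite /potential (lt_geF lt_Tr) (lt_geF lt_Trc).
have : 2 * k%:R * (c%:R / r%:R) <= 2 * k%:R * ln (r%:R / (r - c)%:R) :> R.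
  by rewrite ler_wpM2l // mulr_ge0.
rewrite -ln_gap; lra.
Qed.

Lemma potential_step r c : (c <= r)%N ->
  (0 < c)%N%:R + potential (r - c) <=
  potential r + ((threshold < r%:R) && ~~ (r <= 2 * k * c)%N)%:R.
Proof.
move=> le_cr; case: (posnP c) => [->|c_gt0].
  by rewrite subn0 add0r lerDl.
case: (boolP ((threshold < r%:R) && ~~ (r <= 2 * k * c)%N)) => [/andP[_ light]|heavy].
  by rewrite addrC lerD2r potential_homo // leq_subr.
rewrite addr0; apply: potential_drop; first by rewrite c_gt0.
by move=> lt_Tr; move: heavy; rewrite lt_Tr /= negbK.
Qed.

Lemma potential_le_ln r N : (0 < r <= N)%N ->
  potential r <= threshold + 1 + 2 * k%:R * ln N%:R.
Proof.
case/andP=> r_gt0 le_rN; have N_ge1 : 1 <= N%:R :> R.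
  by rewrite ler1n (leq_trans r_gt0).
have lnN_ge0 : 0 <= 2 * k%:R * ln N%:R :> R by rewrite mulr_ge0 ?ln_ge0.
rewrite /potential; case: ifPn => [le_rT|].
  by apply: le_trans le_rT _; rewrite -addrA lerDl addr_ge0.
rewrite -ltNge => lt_Tr; rewrite lerD2l.
apply: ler_wpM2l; first by rewrite mulr_ge0.
rewrite ln_div ?posrE ?ltr0n //.
have : ln r%:R <= ln N%:R :> R.
  by rewrite ler_ln ?posrE ?ltr0n ?ler_nat ?(leq_trans r_gt0).
have := ln_ge0 threshold_ge1; lra.
Qed.

End Potential.

Lemma leq_card_bigcup (T J : finType) (B : {pred J}) (A : J -> {set T}) :
  (#|\bigcup_(j in B) A j| <= \sum_(j in B) #|A j|)%N.
Proof.
apply: (big_ind2 (fun (X : {set T}) n => #|X| <= n)%N) => [|X1 n1 X2 n2 le1 le2|//].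
  by rewrite cards0.
by apply: leq_trans (leq_card_setU X1 X2).1 _; exact: leq_add.
Qed.

Lemma exists_heavy_set (T J : finType) (A : J -> {set T}) (B : {set J}) (X : {set T}) :
  X != finset.set0 -> X \subset \bigcup_(j in B) A j ->
  exists2 j, j \in B & (#|X| <= #|B| * #|A j :&: X|)%N.
Proof.
case/finset.set0Pn=> x xX sXB; have /bigcupP[j0 j0B _] := fintype.subsetP sXB x xX.
case: (@arg_maxnP _ j0 (mem B) (fun j => #|A j :&: X|) j0B) => j jB maxj.
exists j => //; apply: (@leq_trans #|\bigcup_(i in B) (A i :&: X)|).
  apply/subset_leq_card/fintype.subsetP => y yX.
  have /bigcupP[i iB yi] := fintype.subsetP sXB y yX.
  by apply/bigcupP; exists i; rewrite ?inE ?yi.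
by apply: leq_trans (leq_card_bigcup _ _) _; rewrite -sum_nat_const leq_sum.
Qed.

Section Analysis.
Variables (R : realType) (U I : finType) (S : I -> {set U}) (eps : R) (T0 : {set I}).
Hypotheses (eps_gt0 : 0 < eps) (T0_gt0 : (0 < #|T0|)%N).

Local Notation k := #|T0|.
Local Notation m := #|I|.
Local Notation threshold := (threshold eps k m).
Local Notation potential := (potential eps k m).

Let m_gt0 : (0 < m)%N. Proof. exact: leq_trans T0_gt0 (max_card _). Qed.

Definition covered_by_available (Rc : {set U}) (A : {set I}) :=
  Rc \subset \bigcup_(j in T0 :&: A) S j.

Lemma covered_by_available_setD Rc A j : covered_by_available Rc A ->
  covered_by_available (Rc :\: S j) (A :\ j).
Proof.
move=> cov; apply/fintype.subsetP => x /setDP[xR xNj].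
have /bigcupP[i] := fintype.subsetP cov x xR; rewrite !inE => /andP[iT iA] xi.
by apply/bigcupP; exists i; rewrite // !inE iT iA andbT; apply: contraNneq xNj => <-.
Qed.

Lemma exists_heavy_available Rc A : covered_by_available Rc A ->
  Rc != finset.set0 -> exists2 j, j \in A & (#|Rc| <= k * #|S j :&: Rc|)%N.
Proof.
move=> cov /exists_heavy_set/(_ cov)[j /setIP[_ jA] heavy]; exists j => //.
by apply: leq_trans heavy _; rewrite leq_mul2r subset_leq_card ?orbT ?subsetIl.
Qed.

Lemma light_pick_mass_le Rc A : covered_by_available Rc A -> threshold < #|Rc|%:R ->
  \sum_j (~~ (#|Rc| <= 2 * k * #|S j :&: Rc|)%N)%:R * pick_prob S eps Rc A j
  <= m%:R^-1.
Proof.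
(* A heavy available set has weight >= exp(2x) with x = eps r / 2k, a light
   one at most exp(x), and exp(x) >= m^2 above the threshold. *)
move=> cov lt_Tr; set r := #|Rc| in lt_Tr *.
have kR_gt0 : 0 < k%:R :> R by rewrite ltr0n.
have mR_gt0 : 0 < m%:R :> R by rewrite ltr0n.
have r_gt0 : 0 < r%:R :> R by apply: lt_trans lt_Tr; exact: threshold_gt0.
have [j jA heavy] : exists2 j, j \in A & (r <= k * #|S j :&: Rc|)%N.
  by apply: exists_heavy_available; rewrite // -card_gt0 -(ltr0n R).
set x := eps * r%:R / (2 * k%:R).
set W := \sum_(i in A) emweight S eps Rc i.
have W_ge : expR x * expR x <= W.
  have x2 : x + x = eps * (r%:R / k%:R) by rewrite /x; field; rewrite gt_eqF.
  rewrite -expRD /W (bigD1 j) //= x2; apply: ler_wpDr.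
    by rewrite sumr_ge0 // => i _; exact: expR_ge0.
  rewrite /emweight ler_expR ler_wpM2l ?(ltW eps_gt0) // ler_pdivrMr //.
  by rewrite -natrM ler_nat mulnC.
have W_gt0 : 0 < W by apply: lt_le_trans W_ge; rewrite mulr_gt0 ?expR_gt0.
have light_le i : (~~ (r <= 2 * k * #|S i :&: Rc|)%N)%:R * pick_prob S eps Rc A i
    <= expR x / W.
  have xW_ge0 : 0 <= expR x / W by rewrite divr_ge0 ?expR_ge0 ?ltW.
  rewrite /pick_prob; case: leqP => [_|light]; first by rewrite mul0r.
  rewrite mul1r; case: ifP => // _; rewrite ler_pM2r ?invr_gt0 //.
  rewrite /emweight ler_expR /x -mulrA ler_wpM2l ?(ltW eps_gt0) //.
  rewrite ler_pdivlMr ?mulr_gt0 //.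
  have -> : 2 * k%:R = (2 * k)%:R :> R by rewrite natrM.
  by rewrite -natrM ler_nat mulnC ltnW.
have x_ge : 2 * ln m%:R <= x.
  have : 4 * k%:R * ln m%:R / eps <= r%:R by move: lt_Tr; rewrite /threshold; lra.
  rewrite ler_pdivrMr // /x ler_pdivlMr ?mulr_gt0 //; nra.
have mm_le : m%:R * m%:R <= expR x.
  apply: le_trans (_ : expR (2 * ln m%:R) <= _); last by rewrite ler_expR.
  by rewrite (expRM_natl 2) lnK ?posrE // expr2.
apply: le_trans (ler_sum _ (fun i _ => light_le i)) _.
rewrite sumr_const (eq_card (B := I)) // -[_ *+ m]mulr_natr.
rewrite mulrAC ler_pdivrMr // ler_pdivlMl //.
by apply: le_trans W_ge; rewrite mulrCA ler_wpM2l ?expR_ge0.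
Qed.

Lemma pick_potential_step Rc A : covered_by_available Rc A ->
  \sum_j pick_prob S eps Rc A j *
    ((S j :&: Rc != finset.set0)%:R + potential #|Rc :\: S j|)
  <= potential #|Rc| + m%:R^-1.
Proof.
move=> cov; set r := #|Rc|.
pose light j := ((threshold < r%:R) && ~~ (r <= 2 * k * #|S j :&: Rc|)%N)%:R : R.
have step j : pick_prob S eps Rc A j *
    ((S j :&: Rc != finset.set0)%:R + potential #|Rc :\: S j|)
    <= pick_prob S eps Rc A j * potential r + light j * pick_prob S eps Rc A j.
  rewrite [light j * _]mulrC -mulrDr ler_wpM2l ?pick_prob_ge0 //.
  rewrite cardsD -card_gt0 (finset.setIC Rc).
  by apply: potential_step; rewrite // subset_leq_card ?subsetIr.
apply: le_trans (ler_sum _ (fun j _ => step j)) _.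
rewrite big_split /= -mulr_suml lerD ?ler_piMl ?potential_ge0 ?sum_pick_prob_le1 //.
rewrite /light; have [lt_Tr|_] /= := ltrP threshold r%:R.
  exact: light_pick_mass_le.
by rewrite big1 ?invr_ge0 // => j _; rewrite mul0r.
Qed.

Lemma cost_mass_le_potential n Rc A : covered_by_available Rc A ->
  cost_mass S eps n Rc A <= potential #|Rc| + n%:R / m%:R.
Proof.
elim: n Rc A => [|n IH] Rc A cov.
  by rewrite /cost_mass big_seq1 order_cost_nil mulr0 mul0r addr0 potential_ge0.
rewrite cost_mass_cons.
have step j : pick_prob S eps Rc A j *
    ((S j :&: Rc != finset.set0)%:R * prob_mass S eps n (Rc :\: S j) (A :\ j)
     + cost_mass S eps n (Rc :\: S j) (A :\ j)) <=
    pick_prob S eps Rc A j * ((S j :&: Rc != finset.set0)%:R + potential #|Rc :\: S j|)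
    + pick_prob S eps Rc A j * (n%:R / m%:R).
  rewrite -mulrDr; have [jA|jNA] := boolP (j \in A); last first.
    by rewrite /pick_prob ifN // !mul0r.
  rewrite ler_wpM2l ?pick_prob_ge0 // -addrA lerD //.
    by rewrite ler_piMr ?prob_mass_le1.
  exact/IH/covered_by_available_setD.
apply: le_trans (ler_sum _ (fun j _ => step j)) _.
rewrite big_split /= -mulr_suml -addn1 natrD mulrDl mul1r.
have := pick_potential_step cov.
have : (\sum_j pick_prob S eps Rc A j) * (n%:R / m%:R) <= n%:R / m%:R.
  by rewrite ler_piMl ?divr_ge0 ?sum_pick_prob_le1.
lra.
Qed.

End Analysis.

Lemma ln_nat_ge_half (R : realType) n : (2 <= n)%N -> 1 / 2 <= ln n%:R :> R.
Proof.
move=> n_ge2; have : ln (1 + - (1 / 2)) <= - (1 / 2) :> R by apply: le_ln1Dx; lra.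
have -> : 1 + - (1 / 2) = 2^-1 :> R by field.
rewrite lnV ?posrE // => ln2_ge.
have : ln 2 <= ln n%:R :> R.
  by rewrite ler_ln ?posrE ?ler_nat ?ltr0n ?(leq_trans _ n_ge2).
lra.
Qed.

Lemma opt_cover_witness (U I : finType) (S : I -> {set U}) (Rset : {set U}) :
  Rset \subset \bigcup_j S j ->
  exists2 T0 : {set I},
    Rset \subset \bigcup_(j in T0) S j & (#|T0| <= opt_cover S Rset)%N.
Proof.
move=> covT; pose P := [pred T : {set I} | Rset \subset \bigcup_(j in T) S j].
have PT : P [set: I]%SET by rewrite inE; under eq_bigl do rewrite finset.in_setT.
case: (arg_minnP (fun T : {set I} => #|T|) PT) => T0 PT0 minT0; exists T0 => //.
rewrite /opt_cover; apply: (big_ind (fun n => #|T0| <= n)%N) => //.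
- exact: max_card.
- by move=> n1 n2 le1 le2; rewrite leq_min le1.
Qed.

Lemma cover_card_gt0 (U I : finType) (S : I -> {set U}) (X : {set U}) (T : {set I}) :
  X != finset.set0 -> X \subset \bigcup_(j in T) S j -> (0 < #|T|)%N.
Proof.
case/finset.set0Pn => x xX /fintype.subsetP/(_ x xX)/bigcupP[j jT _].
by apply/card_gt0P; exists j.
Qed.

Lemma privacy_scale_gt0 (R : realType) (eps delta : R) :
  0 < eps -> 0 < delta < 1 -> 0 < eps / (2 * ln (expR 1 / delta)).
Proof.
move=> eps_gt0 /andP[d_gt0 d_lt1]; rewrite divr_gt0 // mulr_gt0 // ln_gt0 //.
rewrite ltr_pdivlMr // mul1r; have := expR_ge1Dx (1 : R); lra.
Qed.

Lemma cover_cost_arith (R : realFieldType) (k opt : nat) (lnU L : R) :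
  (0 < k <= opt)%N -> 1 / 2 <= lnU -> 0 <= L ->
  4 * k%:R * L + 1 + 1 + 2 * k%:R * lnU + 1 <= 8 * (lnU + L) * opt%:R.
Proof.
case/andP=> k_gt0 le_k_opt lnU_ge L_ge0.
have k_ge1 : 1 <= k%:R :> R by rewrite ler1n.
have le_kO : k%:R <= opt%:R :> R by rewrite ler_nat.
have : 8 * (lnU + L) * k%:R <= 8 * (lnU + L) * opt%:R.
  by rewrite ler_wpM2l //; lra.
have : 1 * lnU <= k%:R * lnU by rewrite ler_wpM2r //; lra.
have : 0 <= k%:R * L by rewrite mulr_ge0.
nra.
Qed.

Theorem mainTheorem9 (R : realType) :
  exists C : R, 0 < C /\
  forall (U I : finType) (S : I -> {set U}) (Rset : {set U}) (eps delta : R),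
    (2 <= #|U|)%N ->
    (\bigcup_(j : I) S j)%SET = [set: U]%SET ->
    Rset != finset.set0 ->
    0 < eps -> 0 < delta < 1 ->
    let eps' := eps / (2 * ln (expR 1 / delta)) in
    expected_cost S eps' Rset <=
      C * (ln (#|U|%:R) + ln (#|I|%:R) / eps') * (opt_cover S Rset)%:R.
Proof.
exists 8; split=> // U I S Rset eps delta U_ge2 cover_all R_neq0 eps_gt0 delta01.
cbv zeta; set eps' := eps / _.
have eps'_gt0 : 0 < eps' by exact: privacy_scale_gt0.
have [T0 covT0 le_T0_opt] : exists2 T0 : {set I},
    Rset \subset \bigcup_(j in T0) S j & (#|T0| <= opt_cover S Rset)%N.
  by apply: opt_cover_witness; rewrite cover_all finset.subsetT.
have T0_gt0 := cover_card_gt0 R_neq0 covT0.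
have I_gt0 : (0 < #|I|)%N := leq_trans T0_gt0 (max_card _).
have cov : covered_by_available S T0 Rset [set: I]%SET.
  by rewrite /covered_by_available finset.setIT.
have := cost_mass_le_potential eps'_gt0 T0_gt0 #|I| cov.
have := potential_le_ln #|T0| eps'_gt0 I_gt0 (N := #|U|) (r := #|Rset|).
rewrite card_gt0 R_neq0 max_card divff ?pnatr_eq0 -?lt0n // => /(_ isT).
rewrite /threshold -mulrA => pot cost.
apply: le_trans (expected_cost_le_cost_mass _ _ _) _.
apply: le_trans cost _; apply: le_trans (lerD pot (lexx 1)) _.
apply: cover_cost_arith; rewrite ?T0_gt0 ?ln_nat_ge_half //.
by rewrite divr_ge0 ?ln_ge0 ?ler1n // ltW.
Qed.
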